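(* Let $G$ be a cograph with cotree $T$, and let $d$ be a non-negative integer with $d\le\chi(G)$. Set $h=\chi(G)-d$. Among all $h$-colourings of $G$ with the minimum possible number of monochromatic edges, there is one that satisfies Property 1. Property 1 requires the following for every 0-node $p$ of $T$ with children $q,r$: the colour classes within $T_q$ and within $T_r$ can each be ordered by non-increasing size so that, for every $i\in[\chi(T_p)]$, the $i$-th largest colour class of $T_q$ and the $i$-th largest colour class of $T_r$ have the same colour. Here an empty colour class is considered to have the same colour as every other class.
   Context: A cotree of a cograph $G$ is a rooted binary tree $T$ whose leaves correspond to the vertices of $G$ and whose interior nodes are labelled 0 or 1. To each node $p$ a cograph $T_p$ is associated: $T_p=K_1$ for a leaf; $T_p=T_q+T_r$ (disjoint union) if $p$ is a 0-node with children $q,r$; and $T_p=T_q\times T_r$ (join, i.e. all edges between $T_q$ and $T_r$ added) if $p$ is a 1-node with children $q,r$. The cograph associated with the root is $G$. Every cograph has a cotree. An $h$-colouring is any map $c:V(G)\to\{1,\dots,h\}$, not necessarily proper. An edge is monochromatic if both endpoints get the same colour. For a node $p$, the colour classes of $c$ in $T_p$ are the sets $c^{-1}(j)\cap V(T_p)$. *)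

From mathcomp Require Import all_boot all_fingroup.
Set Implicit Arguments. Unset Strict Implicit. Unset Printing Implicit Defensive.

(* A cotree: a rooted binary tree whose leaves are labelled by vertices and
   whose interior nodes are labelled 0 (false: disjoint union) or 1 (true: join). *)
Inductive cotree (V : Type) : Type :=
  | Leaf of V
  | Node of bool & cotree V & cotree V.
Arguments Leaf {V} _.
Arguments Node {V} _ _ _.

Fixpoint leaves (V : Type) (t : cotree V) : seq V :=
  match t with
  | Leaf v => [:: v]
  | Node _ l r => leaves l ++ leaves r
  end.

Definition vset (V : finType) (t : cotree V) : {set V} := [set v | v \in leaves t].

Fixpoint cotree_adj (V : eqType) (t : cotree V) (u v : V) : bool :=
  match t with
  | Leaf _ => false
  | Node b l r =>
      [|| cotree_adj l u v, cotree_adj r u v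
        | b && (((u \in leaves l) && (v \in leaves r)) ||
                ((v \in leaves l) && (u \in leaves r)))]
  end.

Fixpoint is_subtree (V : Type) (S T : cotree V) : Prop :=
  S = T \/ match T with
           | Leaf _ => False
           | Node _ l r => is_subtree S l \/ is_subtree S r
           end.

Definition is_cotree_of (V : finType) (e : rel V) (T : cotree V) : Prop :=
  [/\ uniq (leaves T), forall v, v \in leaves T & forall u v, e u v = cotree_adj T u v].

Definition colourable (V : finType) (e : rel V) (A : {set V}) (k : nat) : bool :=
  [exists c : {ffun V -> 'I_k},
     [forall u in A, forall v in A, e u v ==> (c u != c v)]].

(* chromatic number of the (loopless) induced subgraph on A: least k <= #|A|
   admitting a proper k-colouring (#|A| colours always suffice when loopless) *)
Definition chi (V : finType) (e : rel V) (A : {set V}) : nat :=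
  \big[minn/#|A|]_(k < #|A|.+1 | colourable e A k) (k : nat).

Definition mono_edges (V : finType) (e : rel V) (h : nat) (c : V -> 'I_h) : nat :=
  #|[set E : {set V} | [exists u, exists v,
        [&& u != v, e u v, c u == c v & E == [set u; v]]]]|.

Definition colour_class (V : finType) (h : nat) (c : V -> 'I_h) (t : cotree V) (j : 'I_h)
  : {set V} := [set v in vset t | c v == j].

Definition nonincreasing_order (V : finType) (h : nat) (c : V -> 'I_h) (t : cotree V)
  (s : {perm 'I_h}) : Prop :=
  forall i j : 'I_h, i <= j -> #|colour_class c t (s j)| <= #|colour_class c t (s i)|.

Definition property1 (V : finType) (T : cotree V) (h : nat) (c : V -> 'I_h) : Prop :=
  forall q r : cotree V, is_subtree (Node false q r) T ->
    exists sq sr : {perm 'I_h},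
      [/\ nonincreasing_order c q sq, nonincreasing_order c r sr &
        forall i : 'I_h, i < chi (cotree_adj (Node false q r)) (vset (Node false q r)) ->
          [|| sq i == sr i, colour_class c q (sq i) == set0
            | colour_class c r (sr i) == set0]].

(* Let p = q + r be a 0-node of the cotree. V(T_p) is a module with no edge between V(T_q)
   and V(T_r), so permuting the colours inside T_q and inside T_r separately leaves every
   monochromatic edge within T_p or outside it in place. The remaining monochromatic edges
   join T_p to its common outside neighbourhood; there are sum_j a_j (|Q_j| + |R_j|) of them,
   where a_j counts outside neighbours of colour j and Q_j, R_j are the colour classes of
   T_q and T_r. By the rearrangement inequality this sum does not increase when the i-th
   largest classes of both T_q and T_r receive the colour with the i-th smallest a_j, which
   aligns the two sorted orders for every i. Doing this bottom-up over the cotree keeps the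
   colouring optimal, and a colour permutation inside a subtree preserves Property 1 below
   it. *)

From mathcomp Require Import all_boot all_fingroup zify.
Set Implicit Arguments. Unset Strict Implicit. Unset Printing Implicit Defensive.

Lemma exists_sorting_perm h (R : rel 'I_h) : total R -> transitive R ->
  exists s : {perm 'I_h}, forall i j : 'I_h, i <= j -> R (s i) (s j).
Proof.
move=> R_total R_trans; set l := sort R (enum 'I_h).
have size_l : size l = h by rewrite size_sort size_enum_ord.
have uniq_l : uniq l by rewrite sort_uniq enum_uniq.
have nth_inj : injective (fun i : 'I_h => nth i l i).
  move=> i j /= eq_ij; apply/ord_inj/eqP.
  by rewrite -(nth_uniq i (s := l)) ?size_l // eq_ij (set_nth_default i j) ?size_l.
exists (perm nth_inj) => i j le_ij; rewrite !permE (set_nth_default i j) ?size_l //.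
have R_refl : reflexive R by move=> y; case/orP: (R_total y y).
by apply: sorted_leq_nth; rewrite ?inE ?size_l //; apply: sort_sorted.
Qed.

Lemma sum_ltn_ord M n : \sum_(t < M) (t < n : nat) = minn n M.
Proof.
elim: M => [|M IH]; first by rewrite big_ord0 minn0.
by rewrite big_ord_recr /= IH; case: ltnP; lia.
Qed.

Section Rearrangement.
Variable I : finType.
Implicit Types (a x y : I -> nat) (U D E : {set I}).

Lemma sum_mul_layers a y M : (forall i, a i <= M) -> (forall i, y i <= M) ->
  \sum_i a i * y i = \sum_(t < M) \sum_(s < M) #|[set i | (t < a i) && (s < y i)]|.
Proof.
move=> a_le y_le; transitivity (\sum_i \sum_(t < M) \sum_(s < M) ((t < a i) * (s < y i))).
  apply: eq_bigr => i _; rewrite -{1}(minn_idPl (a_le i)) -{1}(minn_idPl (y_le i)).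
  by rewrite -!sum_ltn_ord big_distrl; apply: eq_bigr => t _; rewrite big_distrr.
rewrite exchange_big; apply: eq_bigr => t _; rewrite exchange_big; apply: eq_bigr => s _.
rewrite -sum1_card [RHS]big_mkcond; apply: eq_bigr => i _.
by rewrite inE mulnb; case: (_ && _).
Qed.

Lemma leq_card_setI_compl U D E : #|E| = #|D| -> ~: U \subset E ->
  #|U :&: E| <= #|U :&: D|.
Proof.
move=> card_E sub_E; have EU : E :\: U = ~: U by rewrite setDE; apply/setIidPr.
rewrite -(leq_add2r #|E :\: U|) !(setIC U) cardsID card_E -(cardsID U D) leq_add2l EU.
exact/subset_leq_card/subsetDr.
Qed.

Lemma rearrangement a x (rho : {perm I}) :
  (forall i j, a i < a j -> x (rho j) <= x (rho i)) ->
  \sum_i a i * x (rho i) <= \sum_i a i * x i.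
Proof.
move=> anti; set M := \sum_i (a i + x i).
have le_M i : a i + x i <= M by rewrite /M (bigD1 i) //= leq_addr.
have a_le i : a i <= M by apply: leq_trans (le_M i); apply: leq_addr.
have x_le i : x i <= M by apply: leq_trans (le_M i); apply: leq_addl.
rewrite (sum_mul_layers a_le (fun i => x_le (rho i))) (sum_mul_layers a_le x_le).
apply: leq_sum => t _; apply: leq_sum => s _.
set U := [set i | t < a i]; set D := [set i | s < x i]; set E := rho @^-1: D.
rewrite (_ : [set i | _ && _] = U :&: E); last by apply/setP => i; rewrite !inE.
rewrite (_ : [set i | _ && _] = U :&: D); last by apply/setP => i; rewrite !inE.
(* if some i lies in U :&: E, anti-monotonicity puts all of ~: U into E *)
have [->|[i]] := set_0Vmem (U :&: E); first by rewrite cards0.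
rewrite !inE => /andP[t_ai s_xi].
apply: leq_card_setI_compl; first exact/card_preimset/perm_inj.
apply/subsetP => j; rewrite !inE -leqNgt => aj_le_t.
by apply: leq_trans s_xi (anti _ _ _); apply: leq_ltn_trans t_ai.
Qed.

End Rearrangement.

Lemma rearrangement_sorted h (a x : 'I_h -> nat) (pi rho : {perm 'I_h}) :
  (forall i j : 'I_h, i <= j -> a (pi i) <= a (pi j)) ->
  (forall i j : 'I_h, i <= j -> x (rho j) <= x (rho i)) ->
  \sum_k a (pi k) * x (rho k) <= \sum_j a j * x j.
Proof.
move=> a_sorted x_sorted; rewrite (reindex_inj (@perm_inj _ pi^-1%g)) /=.
under eq_bigr do rewrite permKV -permM.
apply: rearrangement => i j; rewrite -(permKV pi i) -(permKV pi j) !permM !permK => lt_a.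
apply: x_sorted; rewrite leqNgt; apply: contraTN lt_a.
by move/ltnW/a_sorted; rewrite -leqNgt.
Qed.

Lemma set2_eq_pair (T : finType) (a b u v : T) : a != b ->
  ([set a; b] == [set u; v]) = ((a, b) == (u, v)) || ((a, b) == (v, u)).
Proof.
move=> ab; apply/eqP/idP => [eq_ab|/orP[]/eqP[-> ->] //]; last by rewrite setUC.
have a_uv : a \in [set u; v] by rewrite -eq_ab set21.
have b_uv : b \in [set u; v] by rewrite -eq_ab set22.
by move: ab; case/set2P: a_uv => ->; case/set2P: b_uv => ->; rewrite ?eqxx ?orbT.
Qed.

Lemma sum_by_class (T J : finType) (f : T -> J) (X : {set T}) (F : J -> nat) :
  \sum_(u in X) F (f u) = \sum_j #|[set u in X | f u == j]| * F j.
Proof.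
rewrite (partition_big f predT) //; apply: eq_bigr => j _.
rewrite (eq_bigr (fun=> F j)) => [|u /andP[_ /eqP-> //]].
by rewrite -sum_nat_const; apply: eq_bigl => u; rewrite inE.
Qed.

Lemma card_class_setU (T J : finType) (f : T -> J) (X Y : {set T}) j :
  [disjoint X & Y] -> #|[set u in X :|: Y | f u == j]| =
                      #|[set u in X | f u == j]| + #|[set u in Y | f u == j]|.
Proof.
move=> XY; rewrite -cardsUI.
have -> : [set u in X | f u == j] :&: [set u in Y | f u == j] = set0.
  apply/setP => u; rewrite !inE; case: (boolP (u \in X)) => // uX.
  by rewrite (disjointFr XY uX) andbF.
by rewrite cards0 addn0; apply: eq_card => u; rewrite !inE andb_orl.
Qed.

Section MonochromaticPairs.
Variables (V : finType) (e : rel V) (h : nat).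
Hypothesis e_sym : symmetric e.
Implicit Types (c : V -> 'I_h) (u v : V).

Definition mono_pair c u v := [&& u != v, e u v & c u == c v].
Definition mono_pairs c := \sum_u \sum_v (mono_pair c u v : nat).

Lemma mono_pairC c u v : mono_pair c u v = mono_pair c v u.
Proof. by rewrite /mono_pair eq_sym e_sym [c u == _]eq_sym. Qed.

Lemma mono_pairsE c : mono_pairs c = 2 * mono_edges e c.
Proof.
set Pr := [set p : V * V | mono_pair c p.1 p.2]; pose edge (p : V * V) := [set p.1; p.2].
have -> : mono_pairs c = #|Pr|.
  rewrite /mono_pairs pair_big -sum1_card [RHS]big_mkcond.
  by apply: eq_bigr => p _; rewrite inE; case: mono_pair.
have -> : mono_edges e c = #|edge @: Pr|.
  apply: eq_card => E; rewrite inE; apply/existsP/imsetP.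
    case=> u /existsP[v /and4P[uv euv cuv /eqP->]].
    by exists (u, v); rewrite // inE /mono_pair uv euv cuv.
  case=> [[u v]]; rewrite inE => /and3P[uv euv cuv] ->.
  by exists u; apply/existsP; exists v; rewrite uv euv cuv eqxx.
rewrite -sum1_card (partition_big_imset edge) mulnC -sum_nat_const.
apply: eq_bigr => _ /imsetP[[u v] uv_Pr ->].
rewrite (eq_bigl (mem [set (u, v); (v, u)])) ?sum1_card.
  by rewrite cards2 xpair_eqE; move: uv_Pr; rewrite inE => /andP[/negbTE-> _].
move=> [a b] /=; rewrite inE in_set2; have [ab_Pr|] := boolP (mono_pair c a b).
  by rewrite set2_eq_pair //; case/and3P: ab_Pr.
have uv : mono_pair c u v by rewrite inE in uv_Pr.
move=> nab; apply/esym/negbTE; apply: contra nab => /orP[]/eqP[-> ->] //.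
by rewrite mono_pairC.
Qed.

Definition mono_minimal c := forall c' : V -> 'I_h, mono_edges e c <= mono_edges e c'.

Lemma eq_mono_edges c c' : c =1 c' -> mono_edges e c = mono_edges e c'.
Proof.
move=> cE; apply: eq_card => E; rewrite !inE.
by apply: eq_existsb => u; apply: eq_existsb => v; rewrite !cE.
Qed.

Lemma exists_mono_minimal : 0 < h -> exists c, mono_minimal c.
Proof.
move=> h_gt0; pose f0 : {ffun V -> 'I_h} := [ffun=> Ordinal h_gt0].
have [f _ f_min] := @arg_minnP _ f0 predT (fun f : {ffun V -> 'I_h} => mono_edges e f) isT.
by exists f => c; rewrite -(eq_mono_edges (ffunE c)); apply: f_min.
Qed.

Section Module.
Variables (A B N : {set V}).
Let P := A :|: B.
Hypothesis AB_disjoint : [disjoint A & B].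
Hypothesis AB_nonadjacent : forall u v, u \in A -> v \in B -> e u v = false.
Hypothesis P_module : forall u v, u \in P -> v \notin P -> e u v = (v \in N).

Definition nbhd_colour_count c j := #|[set v in N :\: P | c v == j]|.

Definition same_side_pairs c :=
  \sum_u \sum_v (((u \in P) == (v \in P)) && mono_pair c u v : nat).

Lemma cross_pairs c : \sum_(u in P) \sum_(v | v \notin P) (mono_pair c u v : nat) =
  \sum_j nbhd_colour_count c j * #|[set u in P | c u == j]|.
Proof.
rewrite (eq_bigr (fun u => nbhd_colour_count c (c u))) => [|u u_P].
  by rewrite sum_by_class; apply: eq_bigr => j _; rewrite mulnC.
rewrite /nbhd_colour_count -sum1_card [RHS]big_mkcond [LHS]big_mkcond.
apply: eq_bigr => v _.
rewrite inE in_setD; case: (boolP (v \in P)) => //= v_P.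
have uv : u != v by apply: contraNneq v_P => <-.
by rewrite /mono_pair uv P_module // eq_sym.
Qed.

Lemma mono_pairs_module c : mono_pairs c = same_side_pairs c +
  2 * \sum_j nbhd_colour_count c j * (#|[set u in A | c u == j]| + #|[set u in B | c u == j]|).
Proof.
pose cross u v := (((u \in P) && (v \notin P)) && mono_pair c u v : nat).
transitivity (same_side_pairs c + (\sum_u \sum_v cross u v + \sum_u \sum_v cross v u)).
  rewrite /mono_pairs /same_side_pairs -!big_split; apply: eq_bigr => u _.
  rewrite -!big_split; apply: eq_bigr => v _ /=; rewrite /cross mono_pairC.
  by case: (u \in P); case: (v \in P); case: mono_pair.
rewrite [\sum_u \sum_v cross v u]exchange_big addnn -mul2n; congr (_ + 2 * _).
under [RHS]eq_bigr do rewrite -(card_class_setU _ _ AB_disjoint); rewrite -cross_pairs.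
rewrite [RHS]big_mkcond; apply: eq_bigr => u _; rewrite /cross.
case: (u \in P) => /=; last by rewrite big1.
by rewrite [RHS]big_mkcond; apply: eq_bigr => v _; case: (v \in P).
Qed.

Definition recolour c (s1 s2 : {perm 'I_h}) v :=
  if v \in A then s1 (c v) else if v \in B then s2 (c v) else c v.

Section Recolour.
Variables (s1 s2 : {perm 'I_h}).

Lemma recolourA c v : v \in A -> recolour c s1 s2 v = s1 (c v).
Proof. by rewrite /recolour => ->. Qed.

Lemma recolourB c v : v \in B -> recolour c s1 s2 v = s2 (c v).
Proof. by move=> v_B; rewrite /recolour v_B (disjointFl AB_disjoint v_B). Qed.

Lemma recolour_out c v : v \notin P -> recolour c s1 s2 v = c v.
Proof. by rewrite /recolour !inE negb_or => /andP[/negbTE-> /negbTE->]. Qed.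

Lemma class_recolourA c j :
  [set u in A | recolour c s1 s2 u == s1 j] = [set u in A | c u == j].
Proof.
apply/setP => u; rewrite !inE; case: (boolP (u \in A)) => // u_A.
by rewrite recolourA ?(inj_eq perm_inj).
Qed.

Lemma class_recolourB c j :
  [set u in B | recolour c s1 s2 u == s2 j] = [set u in B | c u == j].
Proof.
apply/setP => u; rewrite !inE; case: (boolP (u \in B)) => // u_B.
by rewrite recolourB ?(inj_eq perm_inj).
Qed.

Lemma nbhd_colour_count_recolour c j :
  nbhd_colour_count (recolour c s1 s2) j = nbhd_colour_count c j.
Proof.
rewrite /nbhd_colour_count; apply: eq_card => v; rewrite !inE.
by case: (boolP (_ || _)) => //= v_P; rewrite recolour_out ?inE.
Qed.

Lemma same_side_pairs_recolour c : same_side_pairs (recolour c s1 s2) = same_side_pairs c.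
Proof.
apply: eq_bigr => u _; apply: eq_bigr => v _; congr nat_of_bool.
case: (boolP (u \in P)) => u_P; case: (boolP (v \in P)) => v_P //=; last first.
  by rewrite /mono_pair !recolour_out.
move: u_P v_P; rewrite !inE => /orP[u_A|u_B] /orP[v_A|v_B]; rewrite /mono_pair.
- by rewrite !recolourA // (inj_eq perm_inj).
- by rewrite AB_nonadjacent ?andbF.
- by rewrite e_sym AB_nonadjacent ?andbF.
- by rewrite !recolourB // (inj_eq perm_inj).
Qed.

End Recolour.

Lemma exists_sorted_recolour c : exists s1 s2 pi : {perm 'I_h},
  let c' := recolour c s1 s2 in
  [/\ mono_pairs c' <= mono_pairs c,
      forall i j : 'I_h, i <= j ->
        #|[set v in A | c' v == pi j]| <= #|[set v in A | c' v == pi i]| &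
      forall i j : 'I_h, i <= j ->
        #|[set v in B | c' v == pi j]| <= #|[set v in B | c' v == pi i]|].
Proof.
pose a := nbhd_colour_count c.
pose x j := #|[set u in A | c u == j]|; pose y j := #|[set u in B | c u == j]|.
have [pi pi_sorted] := @exists_sorting_perm h (fun i j => a i <= a j)
  (fun i j => leq_total _ _) (fun i j k => @leq_trans (a i) (a j) (a k)).
have [rx rx_sorted] := @exists_sorting_perm h (fun i j => x j <= x i)
  (fun i j => leq_total _ _) (fun i j k ji kj => leq_trans kj ji).
have [ry ry_sorted] := @exists_sorting_perm h (fun i j => y j <= y i)
  (fun i j => leq_total _ _) (fun i j k ji kj => leq_trans kj ji).
(* the k-th largest class of A and of B both get colour [pi k] *)
exists (rx^-1 * pi)%g, (ry^-1 * pi)%g, pi => c'.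
have classA k : [set v in A | c' v == pi k] = [set u in A | c u == rx k].
  by rewrite (_ : pi k = (rx^-1 * pi)%g (rx k)) ?class_recolourA // permM permK.
have classB k : [set v in B | c' v == pi k] = [set u in B | c u == ry k].
  by rewrite (_ : pi k = (ry^-1 * pi)%g (ry k)) ?class_recolourB // permM permK.
split=> [|i j le_ij|i j le_ij]; rewrite ?classA ?classB;
  [|exact: rx_sorted|exact: ry_sorted].
rewrite !mono_pairs_module same_side_pairs_recolour leq_add2l leq_pmul2l //.
rewrite (reindex_inj (@perm_inj _ pi)) /=.
under eq_bigr do rewrite nbhd_colour_count_recolour classA classB.
rewrite !(eq_bigr _ (fun i _ => mulnDr _ _ _)).
by rewrite !big_split; apply: leq_add; apply: rearrangement_sorted.
Qed.

End Module.

End MonochromaticPairs.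

Section CotreeFacts.
Variable V : eqType.
Implicit Types (t S T q r : cotree V) (u v w : V).

Lemma subtree_refl S : is_subtree S S.
Proof. by case: S => [v|b l r]; left. Qed.

Lemma subtree_trans T S U : is_subtree U S -> is_subtree S T -> is_subtree U T.
Proof.
move=> sub_US; elim: T => [v|b l IHl r IHr]; first by case=> // <-.
by case=> [<- //|[/IHl|/IHr]] sub; right; [left|right].
Qed.

Lemma subtree_left b q r : is_subtree q (Node b q r).
Proof. by right; left; apply: subtree_refl. Qed.

Lemma subtree_right b q r : is_subtree r (Node b q r).
Proof. by right; right; apply: subtree_refl. Qed.

Lemma subtree_leaves S T : is_subtree S T -> {subset leaves S <= leaves T}.
Proof.
elim: T => [v|b l IHl r IHr] /=; first by case=> // ->.
by case=> [-> //|[/IHl|/IHr] sub] x /sub; rewrite mem_cat => ->; rewrite ?orbT.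
Qed.

Lemma subtree_uniq S T : is_subtree S T -> uniq (leaves T) -> uniq (leaves S).
Proof.
elim: T => [v|b l IHl r IHr] /=; first by case=> // ->.
by case=> [-> //|[/IHl|/IHr]] IH; rewrite cat_uniq => /and3P[? _ ?]; apply: IH.
Qed.

Lemma leaves_exists t : exists v, v \in leaves t.
Proof.
elim: t => [v|b l [u u_l] r _] /=; first by exists v; rewrite inE.
by exists u; rewrite mem_cat u_l.
Qed.

Lemma leaves_disjoint q r u :
  uniq (leaves q ++ leaves r) -> u \in leaves q -> u \notin leaves r.
Proof.
by rewrite cat_uniq => /and3P[_ /hasPn disj _] u_q; apply/negP => /disj; rewrite u_q.
Qed.

Lemma cotree_adjC t : symmetric (cotree_adj t).
Proof.
move=> u v; elim: t => [w|b l IHl r IHr] //=.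
by rewrite IHl IHr [(v \in _) && _ || _]orbC.
Qed.

Lemma cotree_adj_notin t u v : u \notin leaves t -> cotree_adj t u v = false.
Proof.
elim: t => [w|b l IHl r IHr] //=; rewrite mem_cat negb_or => /andP[u_l u_r].
by rewrite IHl // IHr // (negbTE u_l) (negbTE u_r) !andbF.
Qed.

Lemma cotree_adj_nodeC b l r : cotree_adj (Node b l r) =2 cotree_adj (Node b r l).
Proof.
move=> u v /=; rewrite orbCA; congr [|| _, _ | b && _].
by rewrite orbC andbC [(v \in leaves r) && _]andbC.
Qed.

Lemma cotree_adj_nodeL b l r u v : uniq (leaves l ++ leaves r) -> u \in leaves l ->
  cotree_adj (Node b l r) u v = cotree_adj l u v || b && (v \in leaves r).
Proof.
move=> uniq_lr u_l; have u_r := leaves_disjoint uniq_lr u_l.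
by rewrite /= (cotree_adj_notin _ u_r) u_l (negbTE u_r) andbF orbF.
Qed.

Lemma cotree_adj_nodeR b l r u v : uniq (leaves l ++ leaves r) -> u \in leaves r ->
  cotree_adj (Node b l r) u v = cotree_adj r u v || b && (v \in leaves l).
Proof. by rewrite cotree_adj_nodeC uniq_catC; apply: cotree_adj_nodeL. Qed.

Lemma cotree_adj_subtree S T u v : is_subtree S T -> uniq (leaves T) ->
  u \in leaves S -> v \in leaves S -> cotree_adj T u v = cotree_adj S u v.
Proof.
elim: T => [w|b l IHl r IHr]; first by case=> // ->.
case=> [-> //|[sub|sub]] uniq_lr u_S v_S;
  have uniq_rl := uniq_lr; rewrite uniq_catC in uniq_rl.
- rewrite cotree_adj_nodeL ?(subtree_leaves sub) //.
  rewrite (negbTE (leaves_disjoint uniq_lr (subtree_leaves sub v_S))) andbF orbF.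
  by apply: IHl; rewrite // (subtree_uniq (subtree_left b l r)).
- rewrite cotree_adj_nodeR ?(subtree_leaves sub) //.
  rewrite (negbTE (leaves_disjoint uniq_rl (subtree_leaves sub v_S))) andbF orbF.
  by apply: IHr; rewrite // (subtree_uniq (subtree_right b l r)).
Qed.

Lemma cotree_adj_union T q r u v : is_subtree (Node false q r) T -> uniq (leaves T) ->
  u \in leaves q -> v \in leaves r -> cotree_adj T u v = false.
Proof.
move=> sub uniqT u_q v_r; have uniq_qr := subtree_uniq sub uniqT.
have v_q : v \notin leaves q by rewrite uniq_catC in uniq_qr; apply: leaves_disjoint v_r.
rewrite (cotree_adj_subtree sub) ?mem_cat ?u_q ?v_r ?orbT //.
by rewrite cotree_adj_nodeL // orbF cotree_adjC cotree_adj_notin.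
Qed.

Lemma cotree_adj_module S T u u' v : is_subtree S T -> uniq (leaves T) ->
  u \in leaves S -> u' \in leaves S -> v \notin leaves S ->
  cotree_adj T u v = cotree_adj T u' v.
Proof.
elim: T => [w|b l IHl r IHr]; first by case=> // ->.
case=> [->|[sub|sub]] uniq_lr u_S u'_S v_S.
- by rewrite ![cotree_adj _ _ v]cotree_adjC !cotree_adj_notin.
- rewrite !cotree_adj_nodeL ?(subtree_leaves sub) //.
  by rewrite (IHl sub) // (subtree_uniq (subtree_left b l r)).
- rewrite !cotree_adj_nodeR ?(subtree_leaves sub) //.
  by rewrite (IHr sub) // (subtree_uniq (subtree_right b l r)).
Qed.

End CotreeFacts.

Section ColourPermutation.
Variables (V : finType) (h : nat).
Implicit Types (c : V -> 'I_h) (t T q r : cotree V).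

Lemma colour_class_perm c c' (s : {perm 'I_h}) t j :
  {in leaves t, forall v, c' v = s (c v)} -> colour_class c' t (s j) = colour_class c t j.
Proof.
move=> c'E; apply/setP => v; rewrite !inE.
by case: (boolP (v \in leaves t)) => //= v_t; rewrite c'E // (inj_eq perm_inj).
Qed.

Lemma property1_perm T c c' (s : {perm 'I_h}) :
  {in leaves T, forall v, c' v = s (c v)} -> property1 T c -> property1 T c'.
Proof.
move=> c'E prop q r sub; have [sq [sr [q_sorted r_sorted match_qr]]] := prop q r sub.
have c'Eq : {in leaves q, forall v, c' v = s (c v)}.
  by move=> v v_q; apply: c'E; apply: (subtree_leaves sub); rewrite mem_cat v_q.
have c'Er : {in leaves r, forall v, c' v = s (c v)}.
  by move=> v v_r; apply: c'E; apply: (subtree_leaves sub); rewrite mem_cat v_r orbT.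
exists (sq * s)%g, (sr * s)%g; split=> [i j le_ij|i j le_ij|i lt_i]; rewrite !permM.
- by rewrite !(colour_class_perm _ c'Eq); apply: q_sorted.
- by rewrite !(colour_class_perm _ c'Er); apply: r_sorted.
- rewrite (inj_eq perm_inj) !(colour_class_perm _ c'Eq, colour_class_perm _ c'Er).
  exact: match_qr.
Qed.

End ColourPermutation.

Section Cograph.
Variables (V : finType) (e : rel V) (T : cotree V) (h : nat).
Hypothesis T_cotree : is_cotree_of e T.
Implicit Types (c : V -> 'I_h) (S q r : cotree V).

Lemma cograph_sym : symmetric e.
Proof. by case: T_cotree => _ _ eE u v; rewrite !eE cotree_adjC. Qed.

Lemma vset_disjoint q r : uniq (leaves q ++ leaves r) -> [disjoint vset q & vset r].
Proof.
move=> uniq_qr; rewrite disjoint_subset; apply/subsetP => v.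
by rewrite !inE; apply: leaves_disjoint.
Qed.

Lemma union_node_recolour q r c : is_subtree (Node false q r) T ->
  exists s1 s2 pi : {perm 'I_h}, let c' := recolour (vset q) (vset r) c s1 s2 in
  [/\ mono_edges e c' <= mono_edges e c,
      nonincreasing_order c' q pi & nonincreasing_order c' r pi].
Proof.
case: (T_cotree) => uniqT _ eE sub; have [u0 u0_q] := leaves_exists q.
have uniq_qr := subtree_uniq sub uniqT.
have qr_nonadj u v : u \in vset q -> v \in vset r -> e u v = false.
  by rewrite !inE eE; apply: cotree_adj_union sub uniqT.
have qr_module u v : u \in vset q :|: vset r -> v \notin vset q :|: vset r ->
    e u v = (v \in [set w | e u0 w]).
  rewrite !inE -!mem_cat eE => u_qr v_qr; rewrite eE.
  by apply: (cotree_adj_module sub) => //=; rewrite mem_cat u0_q.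
have [s1 [s2 [pi [le_mono q_sorted r_sorted]]]] :=
  exists_sorted_recolour cograph_sym (vset_disjoint uniq_qr) qr_nonadj qr_module c.
exists s1, s2, pi; split=> //.
by rewrite -(leq_pmul2l (isT : 0 < 2)) -!mono_pairsE //; apply: cograph_sym.
Qed.

Lemma property1_subtree S : is_subtree S T -> forall c, mono_minimal e c ->
  exists c', [/\ mono_minimal e c', property1 S c' & {in [predC leaves S], c' =1 c}].
Proof.
case: (T_cotree) => uniqT _ _; elim: S => [w _ c c_min|b l IHl r IHr sub c c_min].
  by exists c; split=> // q r [].
have uniq_lr : uniq (leaves l ++ leaves r) := subtree_uniq sub uniqT.
have [c1 [c1_min l_c1 c1E]] := IHl (subtree_trans (subtree_left b l r) sub) c c_min.
have [c2 [c2_min r_c2 c2E]] := IHr (subtree_trans (subtree_right b l r) sub) c1 c1_min.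
have l_c2 : property1 l c2.
  apply: (property1_perm (s := 1%g)) l_c1 => v v_l.
  by rewrite perm1 c2E // inE (leaves_disjoint uniq_lr).
have c2E' : {in [predC leaves (Node b l r)], c2 =1 c}.
  by move=> v; rewrite inE /= mem_cat negb_or => /andP[v_l v_r]; rewrite c2E ?c1E.
case: b sub c2E' => sub c2E'.
  by exists c2; split=> // q r' [//|[/l_c2|/r_c2]].
have [s1 [s2 [pi [le_mono l_sorted r_sorted]]]] := union_node_recolour c2 sub.
exists (recolour (vset l) (vset r) c2 s1 s2); split.
- by move=> c'; apply: leq_trans le_mono (c2_min c').
- move=> q r' [[-> ->]|[sub'|sub']].
  + by exists pi, pi; split=> // i _; rewrite eqxx.
  + by apply: property1_perm l_c2 q r' sub' => v v_l; rewrite recolourA ?inE.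
  + apply: property1_perm r_c2 q r' sub' => v v_r.
    by rewrite (recolourB (vset_disjoint uniq_lr)) ?inE.
- move=> v v_lr; rewrite recolour_out ?c2E' //.
  by move: v_lr; rewrite !inE /= mem_cat.
Qed.

End Cograph.

Theorem mainTheorem12 (V : finType) (e : rel V) (T : cotree V) (d : nat) :
  is_cotree_of e T ->
  d <= chi e [set: V] ->
  (0 < #|V| -> d < chi e [set: V]) ->
  exists c : V -> 'I_(chi e [set: V] - d),
    (forall c' : V -> 'I_(chi e [set: V] - d), mono_edges e c <= mono_edges e c') /\
    property1 T c.
Proof.
move=> T_cotree _ d_lt; have [v0 _] := leaves_exists T.
have [c0 c0_min] : exists c : V -> 'I_(chi e [set: V] - d), mono_minimal e c.
  by apply: exists_mono_minimal; rewrite subn_gt0 d_lt //; apply/card_gt0P; exists v0.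
have [c [c_min c_prop _]] := property1_subtree T_cotree (subtree_refl T) c0_min.
by exists c.
Qed.
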